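(* Let $I$ be a finite index set of users. For each $i \in I$ let $p_i \in [0,1]$ and $\Delta p_i \in \mathbb{R}$ with $p_i - \Delta p_i \in [0,1]$. Let $\alpha > 0$ and $\beta > 0$, and define $$J = \{ i \in I : \alpha p_i > \beta \Delta p_i \}, \qquad K = \{ i \in I : \alpha p_i < \beta \Delta p_i \}.$$ Suppose that $\sum_{j \in J} p_j = \sum_{k \in K} p_k$ and that this common value is positive. Define $$\mathscr{C}_1 = \frac{\sum_{j\in J} \beta \Delta p_j}{\sum_{j\in J} p_j}, \qquad \mathscr{C}_2 = \frac{\sum_{k\in K} \alpha p_k}{\sum_{k \in K} p_k}.$$ Then $\mathscr{C}_1 < \mathscr{C}_2$.
   Context: Interpretation (real-time bidding for online ads): each $i\in I$ indexes an ad request from a distinct user $u_i$; $p_i$ is the action rate if the advertiser's ad is shown, $p_i - \Delta p_i$ the background action rate if it is not shown, and $\Delta p_i$ the AR lift. In pure second-price auctions with no other candidates, $DSP_1$ bids $\alpha p_i$ (value-based bidding) and $DSP_2$ bids $\beta \Delta p_i$ (lift-based bidding); $DSP_1$ wins users in $J$ at cost $\beta\Delta p_j$ each, and $DSP_2$ wins users in $K$ at cost $\alpha p_k$ each. Under last-touch attribution the expected attributed actions are $\sum_J p_j$ and $\sum_K p_k$ (assumed equal). $\mathscr{C}_1,\mathscr{C}_2$ are the costs per attributed action of $DSP_1$ and $DSP_2$; the theorem says lift-based bidding costs the DSP more per attributed action. *)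

From mathcomp Require Import all_boot all_order all_algebra.
Set Implicit Arguments. Unset Strict Implicit. Unset Printing Implicit Defensive.
Import Order.TTheory GRing.Theory Num.Theory.
Local Open Scope ring_scope.

Definition setJ (R : realFieldType) (I : finType) (alpha beta : R) (p dp : I -> R) : {set I} :=
  [set i | beta * dp i < alpha * p i].
Definition setK (R : realFieldType) (I : finType) (alpha beta : R) (p dp : I -> R) : {set I} :=
  [set i | alpha * p i < beta * dp i].

From mathcomp Require Import all_boot all_order all_algebra.
Import Order.TTheory GRing.Theory Num.Theory.
Local Open Scope ring_scope.

(* The lift-based bidder pays the value-based bid [alpha p_k] on every user it
   wins, so its cost per attributed action is exactly [alpha].  The value-based
   bidder pays [beta dp_j], which is strictly below [alpha p_j] on each of its
   users, so its cost per action is strictly below [alpha]. *)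

Lemma sum_scale_ratio (R : fieldType) (I : finType) (A : {set I}) (a : R)
    (f : I -> R) :
  \sum_(i in A) f i != 0 -> (\sum_(i in A) a * f i) / (\sum_(i in A) f i) = a.
Proof. by move=> nz; rewrite -mulr_sumr mulfK. Qed.

Lemma neq0_sum_set0 {R : nmodType} {I : finType} {A : {set I}} {f : I -> R} :
  \sum_(i in A) f i != 0 -> A != set0.
Proof. by apply: contraNneq => ->; rewrite big_set0. Qed.

Lemma sum_ratio_lt (R : realFieldType) (I : finType) (A : {set I}) (g f : I -> R)
    (a : R) :
  0 < \sum_(i in A) f i -> (forall i, i \in A -> g i < a * f i) ->
  (\sum_(i in A) g i) / (\sum_(i in A) f i) < a.
Proof.
move=> pos_f lt_gf; rewrite ltr_pdivrMr // mulr_sumr.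
have /set0Pn[i Ai] := neq0_sum_set0 (lt0r_neq0 pos_f).
apply: ltr_sum => [|j /lt_gf //].
by apply/hasP; exists i; rewrite ?mem_index_enum.
Qed.

Theorem theorem2 (R : realFieldType) (I : finType) (p dp : I -> R) (alpha beta : R)
  (hp : forall i, 0 <= p i <= 1)
  (hdp : forall i, 0 <= p i - dp i <= 1)
  (halpha : 0 < alpha) (hbeta : 0 < beta)
  (heq : \sum_(j in setJ alpha beta p dp) p j = \sum_(k in setK alpha beta p dp) p k)
  (hpos : 0 < \sum_(j in setJ alpha beta p dp) p j) :
  (\sum_(j in setJ alpha beta p dp) beta * dp j) / (\sum_(j in setJ alpha beta p dp) p j)
  < (\sum_(k in setK alpha beta p dp) alpha * p k) / (\sum_(k in setK alpha beta p dp) p k).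
Proof.
rewrite sum_scale_ratio -?heq ?gt_eqF //.
by apply: sum_ratio_lt => // j; rewrite inE.
Qed.
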